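(* Let $A\in\mathcal{T}$ and let $\beta^A_{k,n}$ ($k\in\mathbb{Z}$, $n\in\mathbb{Z}_+$) be the coefficients of its series representation, i.e. the $k$-th Fourier coefficient $A_k$ of $\pi^{-1}(A)$ equals $T_{-k,0}\sum_n\beta^A_{k,n}T_{n,n}$ if $k\le0$ and $\big(\sum_n\beta^A_{k,n}T_{n,n}\big)T_{0,k}$ if $k>0$. Then $A$ is compact if and only if $\sum_{n=0}^\infty\beta^A_{k,n}=0$ for every $k\in\mathbb{Z}$.
   Context: Let $\ell^2(\mathbb{Z}_+)$ have orthonormal basis $(e_n)_{n\ge0}$, let $T$ be the unilateral shift $Te_n=e_{n+1}$, and let $\mathcal{T}$ be the norm-closed subalgebra of $B(\ell^2(\mathbb{Z}_+))$ generated by $T$ and $T^*$. For $n,m\in\mathbb{Z}_+$ put $T_{n,m}=T^n(T^* )^m$. $\widetilde{T}_{n,m}\in C(S^1,\mathcal{T})$ is $\widetilde{T}_{n,m}(e^{i\theta})=e^{i(m-n)\theta}T_{n,m}$, $\widetilde{\mathcal{T}}$ is the closed subalgebra of $C(S^1,\mathcal{T})$ (sup norm) generated by them, and $\pi:\widetilde{\mathcal{T}}\to\mathcal{T}$, $\pi(F)=F(1)$, is a *-isomorphism. The $k$-th Fourier coefficient of $F$ is $\frac{1}{2\pi}\int_0^{2\pi}F(e^{i\theta})e^{-ik\theta}d\theta$. Each such coefficient $A_k$ of $\pi^{-1}(A)$ has the displayed form with strongly convergent inner series and $\sum_n\beta^A_{k,n}$ convergent. *)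

From Stdlib Require Import Reals ZArith Lra.
Open Scope R_scope.

Record Cx := mkC { re : R ; im : R }.
Definition C0 : Cx := mkC 0 0.
Definition Cadd (a b : Cx) : Cx := mkC (re a + re b) (im a + im b).
Definition Csub (a b : Cx) : Cx := mkC (re a - re b) (im a - im b).
Definition Cmul (a b : Cx) : Cx :=
  mkC (re a * re b - im a * im b) (re a * im b + im a * re b).
Definition Cnorm2 (a : Cx) : R := re a * re a + im a * im a.
Definition Cexpi (t : R) : Cx := mkC (cos t) (sin t).

Definition Csum_to (b : nat -> Cx) (l : Cx) : Prop :=
  infinite_sum (fun n => re (b n)) (re l) /\ infinite_sum (fun n => im (b n)) (im l).

Definition vec := nat -> Cx.
Definition norm_sq_le (x : vec) (c : R) : Prop :=
  forall N, sum_f_R0 (fun n => Cnorm2 (x n)) N <= c.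
Definition l2 (x : vec) : Prop := exists c, norm_sq_le x c.
Definition vsub (x y : vec) : vec := fun i => Csub (x i) (y i).

(** * Operators (only their action on l^2 vectors matters) *)
Definition Op := vec -> vec.
Definition op_add (A B : Op) : Op := fun x i => Cadd (A x i) (B x i).
Definition op_scal (c : Cx) (A : Op) : Op := fun x i => Cmul c (A x i).
Definition op_mul (A B : Op) : Op := fun x => A (B x).
Definition op_close (A B : Op) (eps : R) : Prop :=
  forall x c, norm_sq_le x c -> norm_sq_le (vsub (A x) (B x)) (eps ^ 2 * c).
Definition op_eq (A B : Op) : Prop := forall x, l2 x -> forall i, A x i = B x i.

Definition shiftT : Op := fun x i => match i with O => C0 | S j => x j end.
Definition shiftTstar : Op := fun x i => x (S i).
(** T_{n,m} = T^n (T^* )^m *)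
Definition Tnm (n m : nat) : Op :=
  fun x i => if Nat.leb n i then x (i - n + m)%nat else C0.

Inductive in_alg : Op -> Prop :=
| alg_T : in_alg shiftT
| alg_Tstar : in_alg shiftTstar
| alg_add A B : in_alg A -> in_alg B -> in_alg (op_add A B)
| alg_scal c A : in_alg A -> in_alg (op_scal c A)
| alg_mul A B : in_alg A -> in_alg B -> in_alg (op_mul A B).

Definition in_Toeplitz (A : Op) : Prop :=
  forall eps, eps > 0 -> exists B, in_alg B /\ op_close A B eps.

(** * C(S^1, T): functions are parametrised by theta, value at e^{i theta} *)
Definition OpF := R -> Op.
Definition Ttil (n m : nat) : OpF :=
  fun t => op_scal (Cexpi ((INR m - INR n) * t)) (Tnm n m).

Inductive in_algt : OpF -> Prop :=
| algt_gen n m : in_algt (Ttil n m)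
| algt_add F G : in_algt F -> in_algt G -> in_algt (fun t => op_add (F t) (G t))
| algt_scal c F : in_algt F -> in_algt (fun t => op_scal c (F t))
| algt_mul F G : in_algt F -> in_algt G -> in_algt (fun t => op_mul (F t) (G t)).

Definition in_Ttilde (F : OpF) : Prop :=
  forall eps, eps > 0 -> exists G, in_algt G /\ forall t, op_close (F t) (G t) eps.

(** pi(F) = F(1) = F at theta = 0 *)
Definition pi_op (F : OpF) : Op := F 0.

(** Ak is the k-th Fourier coefficient (1/2pi) int_0^{2pi} F(e^{it}) e^{-ikt} dt;
    the (norm-continuous) operator valued integral is evaluated coordinatewise:
    (Ak x)_i = (1/2pi) int_0^{2pi} e^{-ikt} (F(t) x)_i dt. *)
Definition is_fourier_coeff (F : OpF) (k : Z) (Ak : Op) : Prop :=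
  forall x, l2 x -> forall i,
    (exists pr : Riemann_integrable
                   (fun t => re (Cmul (Cexpi (- IZR k * t)) (F t x i))) 0 (2 * PI),
        RiemannInt pr = 2 * PI * re (Ak x i)) /\
    (exists pr : Riemann_integrable
                   (fun t => im (Cmul (Cexpi (- IZR k * t)) (F t x i))) 0 (2 * PI),
        RiemannInt pr = 2 * PI * im (Ak x i)).

Fixpoint diag_partial (b : nat -> Cx) (N : nat) : Op :=
  match N with
  | O => op_scal (b O) (Tnm 0 0)
  | S N' => op_add (diag_partial b N') (op_scal (b N) (Tnm N N))
  end.

Definition diag_series_strong (b : nat -> Cx) (S : Op) : Prop :=
  forall x, l2 x -> forall eps, eps > 0 -> exists N0, forall N, (N >= N0)%nat ->
    norm_sq_le (vsub (diag_partial b N x) (S x)) eps.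

Definition series_rep (F : OpF) (beta : Z -> nat -> Cx) : Prop :=
  forall k : Z, exists Ak S,
    is_fourier_coeff F k Ak /\ diag_series_strong (beta k) S /\
    ((k <= 0)%Z -> op_eq Ak (op_mul (Tnm (Z.to_nat (- k)) 0) S)) /\
    ((0 < k)%Z -> op_eq Ak (op_mul S (Tnm 0 (Z.to_nat k)))).

Definition compact_op (A : Op) : Prop :=
  forall xs : nat -> vec, (forall j, norm_sq_le (xs j) 1) ->
    exists phi : nat -> nat, (forall j, (phi j < phi (S j))%nat) /\
      exists y, l2 y /\ forall eps, eps > 0 -> exists J, forall j, (j >= J)%nat ->
        norm_sq_le (vsub (A (xs (phi j))) y) eps.

From Stdlib Require Import Reals ZArith Lra Lia List.
From Stdlib Require Import ClassicalEpsilon FunctionalExtensionality Classical.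
Open Scope R_scope.

(** Write [A_{ij} = (A e_j)_i] for the matrix of [A].  The proof goes through
    the intermediate condition that every diagonal of this matrix vanishes at
    infinity: [A_{n+p, n+q} -> 0] for all offsets [p], [q].

    - Since [T^* T = 1], the algebra generated by [T] and [T^*] consists of
      finite combinations [p = sum c T_{n,m}].  An element [A] of the norm
      closure is therefore linear on l^2 and its columns tend to zero.
    - If [A] is compact, the images of the weakly null unit vectors
      [e_{n+q}] have norm convergent subsequences, whose limits must be zero;
      hence the diagonals vanish.
    - Conversely, if the diagonals vanish and [p] approximates [A], then the
      Toeplitz part [sum c T_{n-m,m-n}] of [p] is small (compare [A] and [p]
      far down the diagonal), so [A] is a norm limit of the finite-range
      operators [p - toeplitz_part p]; such limits are compact (diagonal
      subsequence extraction and completeness of l^2).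
    - Finally, every [F] in the closure of the algebra generated by the
      [Ttil n m] is covariant under the gauge unitaries [diag(e^{i l t})], so
      the [k]-th Fourier coefficient of [F] has the [k]-th diagonal of [A] as
      its own; by the series representation, the partial sums of [beta k]
      are exactly the entries of that diagonal.  Thus [sum_n beta k n = 0]
      for all [k] iff the diagonals vanish, which gives [theorem3]. *)

Lemma Cx_eq (a b : Cx) : re a = re b -> im a = im b -> a = b.
Proof. destruct a, b; simpl; intros; subst; reflexivity. Qed.

Ltac Cx_ring := apply Cx_eq; simpl; try ring.

Definition Cone : Cx := mkC 1 0.

Lemma Cmul_one (z : Cx) : Cmul Cone z = z.
Proof. Cx_ring. Qed.

Lemma Cmul_C0 (c : Cx) : Cmul c C0 = C0.
Proof. Cx_ring. Qed.

Lemma Cnorm2_nonneg (a : Cx) : 0 <= Cnorm2 a.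
Proof. unfold Cnorm2; nra. Qed.

Lemma Cnorm2_C0 : Cnorm2 C0 = 0.
Proof. unfold Cnorm2; simpl; ring. Qed.

Lemma Cnorm2_zero (a : Cx) : Cnorm2 a = 0 -> a = C0.
Proof.
  unfold Cnorm2; intros H; destruct a as [x y]; simpl in *.
  destruct (Rplus_sqr_eq_0 x y H); Cx_ring; auto.
Qed.

Lemma Cnorm2_mul (a b : Cx) : Cnorm2 (Cmul a b) = Cnorm2 a * Cnorm2 b.
Proof. unfold Cnorm2; simpl; ring. Qed.

Lemma Cnorm2_re (a : Cx) : re a * re a <= Cnorm2 a.
Proof. unfold Cnorm2; nra. Qed.

Lemma Cnorm2_im (a : Cx) : im a * im a <= Cnorm2 a.
Proof. unfold Cnorm2; nra. Qed.

Lemma Cnorm2_subC (a b : Cx) : Cnorm2 (Csub a b) = Cnorm2 (Csub b a).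
Proof. unfold Cnorm2; simpl; ring. Qed.

Lemma Cnorm2_sub0 (a : Cx) : Cnorm2 (Csub a C0) = Cnorm2 a.
Proof. unfold Cnorm2; simpl; ring. Qed.

Lemma Cnorm2_add (a b : Cx) : Cnorm2 (Cadd a b) <= 2 * Cnorm2 a + 2 * Cnorm2 b.
Proof.
  unfold Cnorm2; destruct a as [a1 a2], b as [b1 b2]; simpl.
  pose proof (Rle_0_sqr (a1 - b1)); pose proof (Rle_0_sqr (a2 - b2)); unfold Rsqr in *.
  lra.
Qed.

Lemma Cnorm2_sub_tri (a b c : Cx) :
  Cnorm2 (Csub a c) <= 2 * Cnorm2 (Csub a b) + 2 * Cnorm2 (Csub b c).
Proof.
  replace (Csub a c) with (Cadd (Csub a b) (Csub b c)) by Cx_ring.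
  apply Cnorm2_add.
Qed.

Lemma Cnorm2_split (a b : Cx) : Cnorm2 b <= 2 * Cnorm2 (Csub a b) + 2 * Cnorm2 a.
Proof.
  replace b with (Csub b C0) at 1 by Cx_ring.
  rewrite (Cnorm2_subC a b), <- (Cnorm2_sub0 a). apply Cnorm2_sub_tri.
Qed.

Lemma nonneg_small_zero (d K : R) :
  0 <= d -> (forall eps, eps > 0 -> d <= eps ^ 2 * K) -> d = 0.
Proof.
  intros Hd H.
  assert (HK : 0 <= K) by (specialize (H 1 ltac:(lra)); nra).
  destruct (Rle_lt_dec d 0) as [h|h]; [lra|].
  set (e := Rmin 1 (d / (2 * (K + 1)))).
  assert (He : 0 < e) by (unfold e; apply Rmin_pos; [lra| apply Rdiv_lt_0_compat; lra]).
  assert (He1 : e <= 1) by apply Rmin_l.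
  assert (He2 : e * (2 * (K + 1)) <= d).
  { pose proof (Rmin_r 1 (d / (2 * (K + 1)))) as Hm; fold e in Hm.
    apply Rmult_le_compat_r with (r := 2 * (K + 1)) in Hm; [|lra].
    unfold Rdiv in Hm. rewrite Rmult_assoc, Rinv_l in Hm; lra. }
  specialize (H e He).
  assert (e ^ 2 * K <= e * K) by (simpl; nra).
  nra.
Qed.

Lemma Cx_eq_of_small (u v : Cx) (K : R) :
  (forall eps, eps > 0 -> Cnorm2 (Csub u v) <= eps ^ 2 * K) -> u = v.
Proof.
  intros H. apply nonneg_small_zero in H; [|apply Cnorm2_nonneg].
  apply Cnorm2_zero in H. destruct u, v; unfold Csub in H; simpl in H.
  injection H; intros; Cx_ring; lra.
Qed.

Lemma small_square (eps k : R) : eps > 0 -> k > 0 -> exists e, e > 0 /\ k * e ^ 2 <= eps.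
Proof.
  intros He Hk. set (e := Rmin 1 (eps / k)). exists e.
  assert (0 < e) by (unfold e; apply Rmin_pos; [lra|apply Rdiv_lt_0_compat; lra]).
  assert (e <= 1) by apply Rmin_l.
  assert (Hek : k * e <= eps).
  { pose proof (Rmin_r 1 (eps / k)) as Hm; fold e in Hm. apply Rmult_le_compat_l with (r := k) in Hm; [|lra].
    replace (k * (eps / k)) with eps in Hm by (field; lra). exact Hm. }
  split; auto. simpl. nra.
Qed.

Lemma Cexpi_mul (a b : R) (z : Cx) : Cmul (Cexpi a) (Cmul (Cexpi b) z) = Cmul (Cexpi (a + b)) z.
Proof. unfold Cexpi; Cx_ring; rewrite ?cos_plus, ?sin_plus; ring. Qed.

Lemma Cexpi_0 : Cexpi 0 = Cone.
Proof. unfold Cexpi, Cone. rewrite cos_0, sin_0. reflexivity. Qed.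

Lemma Cnorm2_expi (a : R) : Cnorm2 (Cexpi a) = 1.
Proof. unfold Cnorm2, Cexpi; simpl. pose proof (sin2_cos2 a). unfold Rsqr in *. lra. Qed.

Lemma sum_lin (a b : R) (f g : nat -> R) (N : nat) :
  sum_f_R0 (fun n => a * f n + b * g n) N = a * sum_f_R0 f N + b * sum_f_R0 g N.
Proof. induction N; simpl; [|rewrite IHN]; ring. Qed.

Lemma sum_term_le (f : nat -> R) (N i : nat) :
  (forall n, 0 <= f n) -> (i <= N)%nat -> f i <= sum_f_R0 f N.
Proof.
  intros Hf Hi; induction N.
  - replace i with 0%nat by lia; simpl; lra.
  - destruct (Nat.eq_dec i (S N)) as [->|ne]; simpl.
    + pose proof (cond_pos_sum f N Hf); lra.
    + specialize (IHN ltac:(lia)); specialize (Hf (S N)); lra.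
Qed.

Lemma sum_mono (f : nat -> R) (N M : nat) :
  (forall n, 0 <= f n) -> (N <= M)%nat -> sum_f_R0 f N <= sum_f_R0 f M.
Proof. intros Hf H; induction H; [lra|]. simpl. specialize (Hf (S m)); lra. Qed.

Lemma sum_shift_le (f : nat -> R) (N I : nat) :
  (forall n, 0 <= f n) -> sum_f_R0 (fun i => f (i + N)%nat) I <= sum_f_R0 f (I + N).
Proof.
  intros Hf. induction I; simpl.
  - apply sum_term_le; auto.
  - specialize (Hf (S (I + N))). lra.
Qed.

Lemma sum_finite_support (f : nat -> R) (L N : nat) :
  (forall n, 0 <= f n) -> (forall n, (L <= n)%nat -> f n = 0) -> sum_f_R0 f N <= sum_f_R0 f L.
Proof.
  intros Hf Hz. destruct (le_lt_dec N L). { apply sum_mono; auto. }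
  induction l; simpl; [rewrite (Hz (S L)) by lia|rewrite (Hz (S m)) by lia]; lra.
Qed.

Lemma coord_le (x : vec) (c : R) (i : nat) : norm_sq_le x c -> Cnorm2 (x i) <= c.
Proof.
  intros H. eapply Rle_trans; [|apply (H i)].
  apply (sum_term_le (fun n => Cnorm2 (x n))); auto using Cnorm2_nonneg.
Qed.

Lemma norm_sq_le_nonneg (x : vec) (c : R) : norm_sq_le x c -> 0 <= c.
Proof. intros H; pose proof (coord_le x c 0 H); pose proof (Cnorm2_nonneg (x 0%nat)); lra. Qed.

Lemma norm_sq_le_mono (x : vec) (c d : R) : norm_sq_le x c -> c <= d -> norm_sq_le x d.
Proof. intros H h N; specialize (H N); lra. Qed.

Lemma norm_sq_le_ext (x y : vec) (c : R) :
  (forall i, Cnorm2 (x i) = Cnorm2 (y i)) -> norm_sq_le y c -> norm_sq_le x c.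
Proof. intros E H N. erewrite sum_eq; [exact (H N)|]. intros; simpl; apply E. Qed.

Lemma norm_sq_le_comb (w u v : vec) (a b : R) :
  norm_sq_le u a -> norm_sq_le v b ->
  (forall i, Cnorm2 (w i) <= 2 * Cnorm2 (u i) + 2 * Cnorm2 (v i)) ->
  norm_sq_le w (2 * a + 2 * b).
Proof.
  intros Hu Hv H N. eapply Rle_trans.
  - apply sum_Rle with (Bn := fun n => 2 * Cnorm2 (u n) + 2 * Cnorm2 (v n)); intros; apply H.
  - rewrite sum_lin. specialize (Hu N); specialize (Hv N); lra.
Qed.

Lemma norm_sq_le_subC (x y : vec) (c : R) :
  norm_sq_le (vsub x y) c -> norm_sq_le (vsub y x) c.
Proof. apply norm_sq_le_ext. intros i; apply Cnorm2_subC. Qed.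

Lemma norm_sq_le_sub_tri (x y z : vec) (a b : R) :
  norm_sq_le (vsub x y) a -> norm_sq_le (vsub y z) b -> norm_sq_le (vsub x z) (2 * a + 2 * b).
Proof. intros Ha Hb. apply (norm_sq_le_comb _ _ _ a b Ha Hb). intros i; apply Cnorm2_sub_tri. Qed.

Lemma norm_sq_le_near (x y : vec) (a c : R) :
  norm_sq_le (vsub x y) a -> norm_sq_le x c -> norm_sq_le y (2 * a + 2 * c).
Proof. intros Ha Hc. apply (norm_sq_le_comb _ _ _ a c Ha Hc). intros i; apply Cnorm2_split. Qed.

Lemma norm_sq_le_finite (v : vec) (L : nat) :
  (forall i, (L <= i)%nat -> v i = C0) -> norm_sq_le v (sum_f_R0 (fun i => Cnorm2 (v i)) L).
Proof.
  intros H N. apply sum_finite_support; [intros; apply Cnorm2_nonneg|].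
  intros n Hn; rewrite H; auto; apply Cnorm2_C0.
Qed.

Definition unit_vec (j : nat) : vec := fun i => if Nat.eqb i j then Cone else C0.

Lemma unit_vec_norm (j : nat) : norm_sq_le (unit_vec j) 1.
Proof.
  intros N. rewrite (sum_eq _ (fun n => if Nat.eqb n j then 1 else 0)).
  2:{ intros n _. unfold unit_vec. destruct (Nat.eqb n j); unfold Cnorm2; simpl; ring. }
  destruct (le_lt_dec j N) as [Hj|Hj].
  - induction Hj; rewrite ?tech5; cbv beta.
    + destruct j; simpl; [lra|]. rewrite Nat.eqb_refl, sum_eq_R0; [lra|].
      intros n Hn. destruct (Nat.eqb_spec n (S j)); [lia|reflexivity].
    + destruct (Nat.eqb_spec (S m) j); [lia|lra].
  - rewrite sum_eq_R0; [lra|]. intros n Hn. destruct (Nat.eqb_spec n j); [lia|reflexivity].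
Qed.

Lemma unit_vec_l2 (j : nat) : l2 (unit_vec j).
Proof. exists 1; apply unit_vec_norm. Qed.

Definition vscal (c : Cx) (x : vec) : vec := fun j => Cmul c (x j).
Definition vadd (x y : vec) : vec := fun j => Cadd (x j) (y j).

Lemma norm_sq_le_scal (c : Cx) (x : vec) (a : R) :
  norm_sq_le x a -> norm_sq_le (vscal c x) (Cnorm2 c * a).
Proof.
  intros H N. unfold vscal. rewrite (sum_eq _ (fun n => Cnorm2 (x n) * Cnorm2 c)).
  2:{ intros; rewrite Cnorm2_mul; ring. }
  rewrite <- scal_sum. apply Rmult_le_compat_l; [apply Cnorm2_nonneg|apply H].
Qed.

Lemma l2_scal (c : Cx) (x : vec) : l2 x -> l2 (vscal c x).
Proof. intros [a H]; eexists; apply norm_sq_le_scal; eauto. Qed.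

Definition trunc (J : nat) (x : vec) : vec := fun j => if Nat.leb j J then x j else C0.

Lemma norm_sq_le_trunc (J : nat) (x : vec) (c : R) : norm_sq_le x c -> norm_sq_le (trunc J x) c.
Proof.
  intros H N. eapply Rle_trans; [|apply (H N)]. apply sum_Rle. intros n _.
  unfold trunc. destruct (Nat.leb n J); [lra|]. rewrite Cnorm2_C0; apply Cnorm2_nonneg.
Qed.

Lemma norm_sq_le_shift (N : nat) (y : vec) (c : R) : norm_sq_le y c -> norm_sq_le (Tnm N 0 y) c.
Proof.
  intros H K. pose proof (norm_sq_le_nonneg _ _ H).
  destruct (le_lt_dec N K) as [HK|HK].
  - replace K with (K - N + N)%nat by lia.
    destruct (Nat.eq_dec N 0) as [->|HN].
    + rewrite Nat.add_0_r. eapply Rle_trans; [|apply (H (K - 0)%nat)]. right. apply sum_eq.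
      intros i _. unfold Tnm. simpl. f_equal; f_equal; lia.
    + rewrite (tech2 _ (pred N)) by lia.
      rewrite sum_eq_R0.
      2:{ intros i Hi. unfold Tnm. destruct (Nat.leb_spec N i); [lia|apply Cnorm2_C0]. }
      replace (K - N + N - S (pred N))%nat with (K - N)%nat by lia.
      eapply Rle_trans; [|apply (H (K - N)%nat)]. right. rewrite Rplus_0_l. apply sum_eq.
      intros i _. unfold Tnm. destruct (Nat.leb_spec N (S (pred N) + i)); [|lia].
      do 2 f_equal; lia.
  - rewrite sum_eq_R0; [lra|]. intros i Hi. unfold Tnm. destruct (Nat.leb_spec N i); [lia|apply Cnorm2_C0].
Qed.

Definition null_seq (u : nat -> Cx) : Prop :=
  forall eps, eps > 0 -> exists N, forall n, (N <= n)%nat -> Cnorm2 (u n) < eps.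

Lemma null_seq_ext (u v : nat -> Cx) :
  (forall n, Cnorm2 (u n) = Cnorm2 (v n)) -> null_seq v -> null_seq u.
Proof. intros E H eps He. destruct (H eps He) as [N HN]. exists N; intros; rewrite E; auto. Qed.

Lemma null_seq_C0 : null_seq (fun _ => C0).
Proof. intros eps He; exists 0%nat; intros; rewrite Cnorm2_C0; lra. Qed.

Lemma null_seq_add (u v : nat -> Cx) : null_seq u -> null_seq v -> null_seq (fun n => Cadd (u n) (v n)).
Proof.
  intros Hu Hv eps He.
  destruct (Hu (eps/4) ltac:(lra)) as [N1 H1]. destruct (Hv (eps/4) ltac:(lra)) as [N2 H2].
  exists (N1 + N2)%nat; intros n Hn. pose proof (Cnorm2_add (u n) (v n)).
  specialize (H1 n ltac:(lia)); specialize (H2 n ltac:(lia)); lra.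
Qed.

Lemma null_seq_mul (c : Cx) (u : nat -> Cx) : null_seq u -> null_seq (fun n => Cmul c (u n)).
Proof.
  intros Hu eps He. pose proof (Cnorm2_nonneg c).
  destruct (Hu (eps / (Cnorm2 c + 1))) as [N HN]; [apply Rdiv_lt_0_compat; lra|].
  exists N; intros n Hn. rewrite Cnorm2_mul. specialize (HN n Hn).
  pose proof (Cnorm2_nonneg (u n)).
  apply Rmult_lt_compat_l with (r := Cnorm2 c + 1) in HN; [|lra].
  replace ((Cnorm2 c + 1) * (eps / (Cnorm2 c + 1))) with eps in HN by (field; lra). nra.
Qed.

Lemma null_seq_shift (u : nat -> Cx) (r : nat) : null_seq u -> null_seq (fun n => u (n + r)%nat).
Proof. intros H eps He; destruct (H eps He) as [N HN]; exists N; intros; apply HN; lia. Qed.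

Lemma null_seq_sum (u : nat -> nat -> Cx) (I : nat) : (forall i, null_seq (fun N => u N i)) ->
  forall eps, eps > 0 -> exists N0, forall N, (N0 <= N)%nat -> sum_f_R0 (fun i => Cnorm2 (u N i)) I < eps.
Proof.
  intros H. induction I; intros eps He; simpl.
  - destruct (H 0%nat eps He) as [N0 HN]; exists N0; auto.
  - destruct (IHI (eps/2) ltac:(lra)) as [N1 H1]. destruct (H (S I) (eps/2) ltac:(lra)) as [N2 H2].
    exists (N1 + N2)%nat; intros N HN. specialize (H1 N ltac:(lia)); specialize (H2 N ltac:(lia)). lra.
Qed.

Fixpoint Csum (f : nat -> Cx) (J : nat) : Cx :=
  match J with O => f O | S J' => Cadd (Csum f J') (f J) end.

Lemma null_seq_Csum (u : nat -> nat -> Cx) (J : nat) :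
  (forall j, null_seq (fun N => u N j)) -> null_seq (fun N => Csum (u N) J).
Proof.
  intros H. induction J; simpl; auto.
  apply (null_seq_add (fun N => Csum (u N) J) (fun N => u N (S J))); auto.
Qed.

Lemma finite_support_norm_conv (v : nat -> vec) (v0 : vec) (L : nat) :
  (forall a i, (L <= i)%nat -> v a i = C0) -> (forall i, (L <= i)%nat -> v0 i = C0) ->
  (forall i, null_seq (fun a => Csub (v a i) (v0 i))) ->
  forall d, d > 0 -> exists K, forall a, (K <= a)%nat -> norm_sq_le (vsub (v a) v0) d.
Proof.
  intros H1 H2 H3 d Hd.
  destruct (null_seq_sum (fun a i => Csub (v a i) (v0 i)) L H3 d Hd) as [K HK].
  exists K. intros a Ha N. eapply Rle_trans; [apply (sum_finite_support _ L)|].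
  - intros; apply Cnorm2_nonneg.
  - intros n Hn. unfold vsub. rewrite H1, H2 by auto. unfold Cnorm2; simpl; ring.
  - left. apply HK; auto.
Qed.

(** ** Polynomials in [T] and [T^*]

    Since [T^* T = 1], every element of the algebra generated by [T] and [T^*]
    is a finite linear combination of the operators [T_{n,m}]; such a
    combination is represented by a list of coefficient/index triples. *)

Definition monomial : Type := (Cx * nat * nat)%type.
Definition poly : Type := list monomial.

Fixpoint poly_op (p : poly) (x : vec) (i : nat) : Cx :=
  match p with
  | nil => C0
  | (c, n, m) :: p' => Cadd (Cmul c (Tnm n m x i)) (poly_op p' x i)
  end.

Lemma poly_op_app (p q : poly) (x : vec) (i : nat) :
  poly_op (p ++ q) x i = Cadd (poly_op p x i) (poly_op q x i).
Proof. induction p as [|[[c n] m] p IH]; simpl; [|rewrite IH]; Cx_ring. Qed.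

Definition poly_scal (c : Cx) (p : poly) : poly :=
  map (fun t => match t with (d, n, m) => (Cmul c d, n, m) end) p.

Lemma poly_op_scal (c : Cx) (p : poly) (x : vec) (i : nat) :
  poly_op (poly_scal c p) x i = Cmul c (poly_op p x i).
Proof. induction p as [|[[d n] m] p IH]; simpl; [|rewrite IH]; Cx_ring. Qed.

Definition Tnm_prod (n m p q : nat) : nat * nat :=
  if Nat.leb m p then ((n + p - m)%nat, q) else (n, (m - p + q)%nat).

Lemma Tnm_comp (n m p q : nat) (x : vec) (i : nat) :
  Tnm n m (Tnm p q x) i = Tnm (fst (Tnm_prod n m p q)) (snd (Tnm_prod n m p q)) x i.
Proof.
  unfold Tnm, Tnm_prod.
  destruct (Nat.leb_spec m p); simpl;
  repeat match goal with |- context [Nat.leb ?a ?b] => destruct (Nat.leb_spec a b) end;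
  try lia; try reflexivity; f_equal; lia.
Qed.

Definition poly_lmul (n m : nat) (p : poly) : poly :=
  map (fun t => match t with (d, a, b) => (d, fst (Tnm_prod n m a b), snd (Tnm_prod n m a b)) end) p.

Lemma poly_op_lmul (n m : nat) (p : poly) (x : vec) (i : nat) :
  Tnm n m (poly_op p x) i = poly_op (poly_lmul n m p) x i.
Proof.
  induction p as [|[[d a] b] p IH]; simpl.
  - unfold Tnm. destruct (Nat.leb n i); reflexivity.
  - rewrite <- IH, <- Tnm_comp. unfold Tnm. destruct (Nat.leb n i); [reflexivity|Cx_ring].
Qed.

Fixpoint poly_mul (p q : poly) : poly :=
  match p with
  | nil => nil
  | (c, n, m) :: p' => poly_scal c (poly_lmul n m q) ++ poly_mul p' q
  end.

Lemma poly_op_mul (p q : poly) (x : vec) (i : nat) :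
  poly_op p (poly_op q x) i = poly_op (poly_mul p q) x i.
Proof.
  induction p as [|[[c n] m] p IH]; simpl; [reflexivity|].
  rewrite poly_op_app, poly_op_scal, IH, poly_op_lmul. reflexivity.
Qed.

Lemma alg_poly (B : Op) : in_alg B -> exists p, forall x i, B x i = poly_op p x i.
Proof.
  induction 1 as [| |B1 B2 _ [p1 H1] _ [p2 H2]|c B _ [p H]|B1 B2 _ [p1 H1] _ [p2 H2]].
  - exists ((Cone, 1%nat, 0%nat) :: nil). intros x i. simpl. unfold shiftT, Tnm.
    destruct i; simpl; Cx_ring; rewrite Nat.sub_0_r, Nat.add_0_r; ring.
  - exists ((Cone, 0%nat, 1%nat) :: nil). intros x i. simpl. unfold shiftTstar, Tnm.
    simpl. replace (i - 0 + 1)%nat with (S i) by lia. Cx_ring.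
  - exists (p1 ++ p2). intros; unfold op_add; rewrite poly_op_app, H1, H2; reflexivity.
  - exists (poly_scal c p). intros; unfold op_scal; rewrite poly_op_scal, H; reflexivity.
  - exists (poly_mul p1 p2). intros; unfold op_mul. rewrite H1, <- poly_op_mul. f_equal.
    apply functional_extensionality; intros; auto.
Qed.

Lemma poly_op_scal_vec (p : poly) (c : Cx) (x : vec) (i : nat) :
  poly_op p (vscal c x) i = Cmul c (poly_op p x i).
Proof.
  induction p as [|[[d n] m] p IH]; simpl; [Cx_ring|].
  rewrite IH. unfold Tnm, vscal. destruct (Nat.leb n i); Cx_ring.
Qed.

Lemma poly_op_add_vec (p : poly) (x y : vec) (i : nat) :
  poly_op p (vadd x y) i = Cadd (poly_op p x i) (poly_op p y i).
Proof.
  induction p as [|[[d n] m] p IH]; simpl; [Cx_ring|].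
  rewrite IH. unfold Tnm, vadd. destruct (Nat.leb n i); Cx_ring.
Qed.

Lemma poly_op_coord_cont (p : poly) (xs : nat -> vec) (x : vec) (i : nat) :
  (forall j, null_seq (fun a => Csub (xs a j) (x j))) ->
  null_seq (fun a => Csub (poly_op p (xs a) i) (poly_op p x i)).
Proof.
  intros H. induction p as [|[[d n] m] p IH]; simpl.
  - apply null_seq_ext with (v := fun _ => C0); [intros; f_equal; Cx_ring|apply null_seq_C0].
  - apply null_seq_ext with (v := fun a => Cadd (Cmul d (Csub (Tnm n m (xs a) i) (Tnm n m x i)))
                                               (Csub (poly_op p (xs a) i) (poly_op p x i))).
    { intros; f_equal; Cx_ring. }
    apply null_seq_add; [|exact IH]. apply null_seq_mul. unfold Tnm.
    destruct (Nat.leb n i); [apply H|].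
    apply null_seq_ext with (v := fun _ => C0); [intros; f_equal; Cx_ring|apply null_seq_C0].
Qed.

Fixpoint poly_bound (p : poly) : nat :=
  match p with nil => 0%nat | (_, n, m) :: p' => (n + m + poly_bound p')%nat end.

Lemma poly_op_unit_vec_far (p : poly) (i j : nat) :
  (i + poly_bound p < j)%nat -> poly_op p (unit_vec j) i = C0.
Proof.
  induction p as [|[[d n] m] p IH]; simpl; intros H; [reflexivity|].
  rewrite IH by lia. unfold Tnm, unit_vec.
  destruct (Nat.leb n i); [|Cx_ring].
  destruct (Nat.eqb_spec (i - n + m) j); [lia|]. Cx_ring.
Qed.

(** The Toeplitz part of [sum c T_{n,m}] is [sum c T_{n-m,m-n}], the Toeplitz
    operator with the same symbol; it coincides with [p] far from the corner. *)
Definition toeplitz_part (p : poly) : poly :=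
  map (fun t => match t with (c, n, m) => (c, (n - m)%nat, (m - n)%nat) end) p.

Lemma poly_op_shift (p : poly) (N : nat) (x : vec) (i : nat) :
  (poly_bound p <= N)%nat -> poly_op p (Tnm N 0 x) (i + N) = poly_op (toeplitz_part p) x i.
Proof.
  induction p as [|[[d n] m] p IH]; simpl; intros H; [reflexivity|].
  rewrite IH by lia. do 2 f_equal. unfold Tnm.
  repeat match goal with |- context [Nat.leb ?a ?b] => destruct (Nat.leb_spec a b) end;
  try lia; try reflexivity; f_equal; lia.
Qed.

Lemma poly_op_far_rows (p : poly) (x : vec) (i : nat) :
  (poly_bound p <= i)%nat -> poly_op p x i = poly_op (toeplitz_part p) x i.
Proof.
  induction p as [|[[d n] m] p IH]; simpl; intros H; [reflexivity|].
  rewrite IH by lia. do 2 f_equal. unfold Tnm.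
  repeat match goal with |- context [Nat.leb ?a ?b] => destruct (Nat.leb_spec a b) end;
  try lia; try reflexivity; f_equal; lia.
Qed.

Lemma toeplitz_part_local (p : poly) (x y : vec) (i : nat) :
  (forall j, (j <= i + poly_bound p)%nat -> x j = y j) ->
  poly_op (toeplitz_part p) x i = poly_op (toeplitz_part p) y i.
Proof.
  induction p as [|[[d n] m] p IH]; simpl; intros H; [reflexivity|].
  rewrite IH by (intros; apply H; lia). do 2 f_equal. unfold Tnm.
  destruct (Nat.leb_spec (n - m) i); [|reflexivity]. apply H. lia.
Qed.

(** An element [A] of the norm closure is approximated by polynomials; this
    makes it linear on l^2 and forces its columns to tend to zero. *)

Lemma toeplitz_poly_approx (A : Op) : in_Toeplitz A -> forall eps, eps > 0 -> exists p,
  forall x c, norm_sq_le x c -> norm_sq_le (vsub (A x) (poly_op p x)) (eps ^ 2 * c).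
Proof.
  intros HA eps He. destruct (HA eps He) as [B [HB Hc]].
  destruct (alg_poly B HB) as [p Hp]. exists p. intros x c Hx.
  eapply norm_sq_le_ext; [|apply Hc, Hx]. intros i. unfold vsub. rewrite Hp. reflexivity.
Qed.

Section ToeplitzElement.

Variable A : Op.
Hypothesis HA : in_Toeplitz A.

Lemma toeplitz_scal (x : vec) (c : Cx) (i : nat) : l2 x -> A (vscal c x) i = Cmul c (A x i).
Proof.
  intros [a Hx]. apply Cx_eq_of_small with (K := 4 * Cnorm2 c * a). intros eps He.
  destruct (toeplitz_poly_approx A HA eps He) as [p Hp].
  pose proof (coord_le _ _ i (Hp _ _ (norm_sq_le_scal c x a Hx))) as H1.
  pose proof (coord_le _ _ i (Hp _ _ Hx)) as H2.
  unfold vsub in *. rewrite poly_op_scal_vec in H1.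
  replace (Csub (A (vscal c x) i) (Cmul c (A x i))) with
    (Cadd (Csub (A (vscal c x) i) (Cmul c (poly_op p x i))) (Cmul c (Csub (poly_op p x i) (A x i))))
    by Cx_ring.
  eapply Rle_trans; [apply Cnorm2_add|]. rewrite Cnorm2_mul, (Cnorm2_subC (poly_op p x i)).
  pose proof (Cnorm2_nonneg c).
  assert (Cnorm2 c * Cnorm2 (Csub (A x i) (poly_op p x i)) <= Cnorm2 c * (eps ^ 2 * a))
    by (apply Rmult_le_compat_l; auto).
  lra.
Qed.

Lemma toeplitz_add (x y : vec) (i : nat) : l2 x -> l2 y -> A (vadd x y) i = Cadd (A x i) (A y i).
Proof.
  intros [a Hx] [b Hy].
  assert (Hxy : norm_sq_le (vadd x y) (2 * a + 2 * b)).
  { apply (norm_sq_le_comb _ _ _ a b Hx Hy). intros; apply Cnorm2_add. }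
  apply Cx_eq_of_small with (K := 2 * (2 * a + 2 * b) + 4 * a + 4 * b). intros eps He.
  destruct (toeplitz_poly_approx A HA eps He) as [p Hp].
  pose proof (coord_le _ _ i (Hp _ _ Hxy)) as H1.
  pose proof (coord_le _ _ i (Hp _ _ Hx)) as H2.
  pose proof (coord_le _ _ i (Hp _ _ Hy)) as H3.
  unfold vsub in *. rewrite poly_op_add_vec in H1.
  replace (Csub (A (vadd x y) i) (Cadd (A x i) (A y i))) with
    (Cadd (Csub (A (vadd x y) i) (Cadd (poly_op p x i) (poly_op p y i)))
          (Cadd (Csub (poly_op p x i) (A x i)) (Csub (poly_op p y i) (A y i)))) by Cx_ring.
  eapply Rle_trans; [apply Cnorm2_add|].
  pose proof (Cnorm2_add (Csub (poly_op p x i) (A x i)) (Csub (poly_op p y i) (A y i))).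
  rewrite !(Cnorm2_subC (poly_op p _ i)) in H.
  lra.
Qed.

(** The columns [A e_j] tend to zero coordinatewise, since those of every
    polynomial are eventually zero. *)
Lemma toeplitz_columns_vanish (i : nat) : null_seq (fun j => A (unit_vec j) i).
Proof.
  intros eps He.
  destruct (small_square eps 2 He ltac:(lra)) as [e [He1 He2]].
  destruct (toeplitz_poly_approx A HA e He1) as [p Hp].
  exists (S (i + poly_bound p)). intros n Hn.
  pose proof (coord_le _ _ i (Hp _ _ (unit_vec_norm n))) as H. unfold vsub in H.
  rewrite poly_op_unit_vec_far, Cnorm2_sub0 in H by lia.
  assert (0 < e ^ 2) by (simpl; nra). lra.
Qed.

Lemma toeplitz_shift_trunc (N J : nat) (y : vec) (i : nat) :
  A (Tnm N 0 (trunc J y)) i = Csum (fun j => Cmul (y j) (A (unit_vec (j + N)) i)) J.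
Proof.
  assert (Hl2 : forall J, l2 (Tnm N 0 (trunc J y))).
  { intros J'. eexists. apply norm_sq_le_shift, (norm_sq_le_finite _ (S J')).
    intros k Hk. unfold trunc. destruct (Nat.leb_spec k J'); [lia|reflexivity]. }
  induction J as [|J IH]; simpl.
  - replace (Tnm N 0 (trunc 0 y)) with (vscal (y 0%nat) (unit_vec N)).
    + rewrite toeplitz_scal by apply unit_vec_l2. reflexivity.
    + apply functional_extensionality; intros k. unfold vscal, unit_vec, Tnm, trunc.
      destruct (Nat.eqb_spec k N), (Nat.leb_spec N k); try lia; simpl.
      * subst. rewrite Nat.sub_diag. simpl. Cx_ring.
      * destruct (Nat.leb_spec (k - N + 0) 0); [lia|Cx_ring].
      * Cx_ring.
  - replace (Tnm N 0 (trunc (S J) y))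
      with (vadd (Tnm N 0 (trunc J y)) (vscal (y (S J)) (unit_vec (S (J + N))))).
    + rewrite toeplitz_add, toeplitz_scal, IH by auto using l2_scal, unit_vec_l2. reflexivity.
    + apply functional_extensionality; intros k. unfold vadd, vscal, unit_vec, Tnm, trunc.
      destruct (Nat.eqb_spec k (S (J + N))) as [->|Hk].
      * rewrite (proj2 (Nat.leb_le N _)), Nat.add_0_r by lia.
        replace (S (J + N) - N)%nat with (S J) by lia.
        rewrite Nat.leb_refl, (proj2 (Nat.leb_gt _ _)) by lia. Cx_ring.
      * destruct (Nat.leb_spec N k); [|Cx_ring]. rewrite Nat.add_0_r.
        destruct (Nat.leb_spec (k - N) J), (Nat.leb_spec (k - N) (S J)); try lia; Cx_ring.
Qed.

End ToeplitzElement.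

Definition strictly_increasing (g : nat -> nat) : Prop := forall a, (g a < g (S a))%nat.

Lemma strictly_increasing_ge (g : nat -> nat) : strictly_increasing g -> forall a, (a <= g a)%nat.
Proof. intros H a; induction a; [lia|]. specialize (H a); lia. Qed.

Lemma strictly_increasing_lt (g : nat -> nat) :
  strictly_increasing g -> forall a b, (a < b)%nat -> (g a < g b)%nat.
Proof. intros H a b Hab; induction Hab; [apply H|]. specialize (H m); lia. Qed.

Lemma strictly_increasing_le (g : nat -> nat) :
  strictly_increasing g -> forall a b, (a <= b)%nat -> (g a <= g b)%nat.
Proof.
  intros H a b Hab. destruct (Nat.eq_dec a b) as [->|ne]; [lia|].
  apply Nat.lt_le_incl, strictly_increasing_lt; auto; lia.
Qed.

Lemma subseq_of_frequent (P : nat -> nat -> Prop) :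
  (forall a N, exists n, (N <= n)%nat /\ P a n) ->
  exists g, strictly_increasing g /\ forall a, P a (g a).
Proof.
  intros H.
  set (f := fun a N => proj1_sig (constructive_indefinite_description _ (H a N))).
  assert (Hf : forall a N, (N <= f a N)%nat /\ P a (f a N))
    by (intros; unfold f; destruct constructive_indefinite_description; auto).
  set (g := fix g a := match a with O => f O O | S a' => f a (S (g a')) end).
  exists g. split.
  - intros a. simpl. destruct (Hf (S a) (S (g a))); lia.
  - intros [|a]; simpl; apply Hf.
Qed.

Lemma small_inv (eps : R) : eps > 0 -> exists n, / INR (S n) < eps.
Proof.
  intros He. destruct (archimed (/ eps)) as [H _].
  assert (Hz : (0 < up (/ eps))%Z).
  { apply lt_IZR. pose proof (Rinv_0_lt_compat eps He); simpl; lra. }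
  exists (Z.to_nat (up (/ eps))).
  rewrite S_INR, INR_IZR_INZ, Z2Nat.id by lia.
  rewrite <- (Rinv_inv eps) at 2. apply Rinv_lt_contravar.
  - pose proof (Rinv_0_lt_compat eps He); nra.
  - lra.
Qed.

Lemma bounded_real_subseq (u : nat -> R) : (forall a, -1 <= u a <= 1) ->
  exists g, strictly_increasing g /\ exists l, Un_cv (fun a => u (g a)) l.
Proof.
  intros Hb.
  destruct (Bolzano_Weierstrass u _ (compact_P3 (-1) 1) Hb) as [l Hl].
  destruct (subseq_of_frequent (fun a n => Rabs (u n - l) < / INR (S a))) as [g [Hg Hgl]].
  { intros a N. assert (Hp : 0 < / INR (S a)) by (apply Rinv_0_lt_compat, lt_0_INR; lia).
    destruct (Hl (disc l (mkposreal _ Hp)) N) as [n [Hn Hv]].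
    - exists (mkposreal _ Hp). intros y Hy; exact Hy.
    - exists n; split; auto. }
  exists g. split; [exact Hg|]. exists l. intros eps He. destruct (small_inv eps He) as [n Hn].
  exists n. intros a Ha. unfold R_dist. eapply Rlt_trans; [apply Hgl|].
  eapply Rle_lt_trans; [|apply Hn]. apply Rinv_le_contravar; [apply lt_0_INR; lia|]. apply le_INR; lia.
Qed.

Lemma subseq_selector : exists G : (nat -> R) -> nat -> nat, forall v,
  strictly_increasing (G v) /\
  ((forall a, -1 <= v a <= 1) -> exists l, Un_cv (fun a => v (G v a)) l).
Proof.
  assert (HG : forall v : nat -> R, exists g, strictly_increasing g /\
            ((forall a, -1 <= v a <= 1) -> exists l, Un_cv (fun a => v (g a)) l)).
  { intros v. destruct (classic (forall a, -1 <= v a <= 1)) as [Hv|Hv].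
    - destruct (bounded_real_subseq v Hv) as [g [Hg Hl]]. exists g; split; auto.
    - exists (fun a => a). split; [intros a; lia| intros; contradiction]. }
  exists (fun v => proj1_sig (constructive_indefinite_description _ (HG v))).
  intros v. destruct constructive_indefinite_description; auto.
Qed.

Lemma diagonal_subseq (u : nat -> nat -> R) : (forall k a, -1 <= u k a <= 1) ->
  exists phi, strictly_increasing phi /\ forall k, exists l, Un_cv (fun a => u k (phi a)) l.
Proof.
  intros Hb. destruct subseq_selector as [G HG].
  (* [psi k] is the [k]-th nested subsequence; [u k] converges along it *)
  set (psi := fix psi k := match k with
              | O => G (u O)
              | S k' => fun a => psi k' (G (fun b => u (S k') (psi k' b)) a) end).
  assert (Hpsi : forall k, strictly_increasing (psi k)).
  { induction k; simpl; [apply HG|]. intros a.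
    apply strictly_increasing_lt; auto. apply (HG (fun b => u (S k) (psi k b))). }
  assert (Hconv : forall k, exists l, Un_cv (fun b => u k (psi k b)) l).
  { intros [|k]; simpl; [apply (HG (u O))|apply (HG (fun b => u (S k) (psi k b)))]; intros; apply Hb. }
  assert (Hnest : forall d k, exists R, (forall b, (b <= R b)%nat) /\
                    forall b, psi (d + k)%nat b = psi k (R b)).
  { induction d; intros k.
    - exists (fun b => b); split; auto.
    - destruct (IHd k) as [R [HR1 HR2]].
      exists (fun b => R (G (fun b => u (S (d + k)) (psi (d + k)%nat b)) b)). split.
      + intros b. eapply Nat.le_trans; [|apply HR1]. apply strictly_increasing_ge, HG.
      + intros b. simpl. rewrite HR2. reflexivity. }
  exists (fun a => psi a a). split.
  - intros a. simpl.
    apply Nat.lt_le_trans with (psi a (S a)); [apply Hpsi|].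
    apply strictly_increasing_le; auto. apply strictly_increasing_ge, HG.
  - intros k. destruct (Hconv k) as [l Hl]. exists l. intros eps He.
    destruct (Hl eps He) as [N HN]. exists (N + k)%nat. intros a Ha.
    destruct (Hnest (a - k)%nat k) as [R [HR1 HR2]].
    replace (psi a a) with (psi k (R a)) by (rewrite <- HR2; f_equal; lia).
    apply HN. specialize (HR1 a). lia.
Qed.

(** ** A compactness criterion

    An operator that is a norm limit of operators with finitely supported
    range, each coordinatewise continuous, is compact: a bounded sequence has
    a coordinatewise convergent subsequence (diagonal argument), on which the
    images form a Cauchy sequence, which converges since l^2 is complete. *)

Lemma sq_small (d e : R) : e > 0 -> d * d <= e * e / 2 -> Rabs d < e.
Proof.
  intros He H. destruct (Rcase_abs d) as [h|h]; [rewrite Rabs_left|rewrite Rabs_right]; nra.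
Qed.

Lemma null_seq_of_cv (v : nat -> Cx) (r s : R) :
  Un_cv (fun b => re (v b)) r -> Un_cv (fun b => im (v b)) s ->
  null_seq (fun b => Csub (v b) (mkC r s)).
Proof.
  intros H1 H2 eps He.
  set (e := Rmin 1 (eps / 4)).
  assert (He0 : 0 < e) by (unfold e; apply Rmin_pos; lra).
  assert (He1 : e <= 1) by apply Rmin_l. assert (He2 : e <= eps / 4) by apply Rmin_r.
  destruct (H1 e He0) as [N1 HN1]. destruct (H2 e He0) as [N2 HN2].
  exists (N1 + N2)%nat. intros n Hn. specialize (HN1 n ltac:(lia)). specialize (HN2 n ltac:(lia)).
  unfold R_dist in *. unfold Cnorm2, Csub; simpl.
  apply Rabs_def2 in HN1. apply Rabs_def2 in HN2.
  assert ((re (v n) - r) * (re (v n) - r) < e * e) by nra.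
  assert ((im (v n) - s) * (im (v n) - s) < e * e) by nra.
  assert (e * e <= e) by nra. lra.
Qed.

Lemma coordinatewise_subseq (xs : nat -> vec) : (forall a, norm_sq_le (xs a) 1) ->
  exists phi x, strictly_increasing phi /\ forall j, null_seq (fun a => Csub (xs (phi a) j) (x j)).
Proof.
  intros Hxs.
  (* coordinate [j] contributes its real part as sequence [2j] and its imaginary part as [2j+1] *)
  set (u := fun k a => if Nat.even k then re (xs a (Nat.div2 k)) else im (xs a (Nat.div2 k))).
  assert (Hu : forall k a, -1 <= u k a <= 1).
  { intros k a. pose proof (coord_le _ _ (Nat.div2 k) (Hxs a)).
    pose proof (Cnorm2_re (xs a (Nat.div2 k))). pose proof (Cnorm2_im (xs a (Nat.div2 k))).
    unfold u. destruct (Nat.even k); split; nra. }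
  destruct (diagonal_subseq u Hu) as [phi [Hphi Hlim]].
  assert (Hx : forall j, exists xj, null_seq (fun a => Csub (xs (phi a) j) xj)).
  { intros j. destruct (Hlim (2 * j)%nat) as [r Hr]. destruct (Hlim (S (2 * j))) as [s Hs].
    exists (mkC r s). apply null_seq_of_cv.
    - eapply Un_cv_ext; [|exact Hr]. intros a. unfold u. rewrite Nat.even_mul, Nat.div2_double. reflexivity.
    - eapply Un_cv_ext; [|exact Hs]. intros a. unfold u.
      rewrite Nat.even_succ, Nat.odd_mul, Nat.div2_succ_double. reflexivity. }
  exists phi, (fun j => proj1_sig (constructive_indefinite_description _ (Hx j))). split; [exact Hphi|].
  intros j. destruct constructive_indefinite_description; auto.
Qed.

Lemma cv_le (u : nat -> R) (l e : R) (K : nat) : Un_cv u l -> (forall n, (K <= n)%nat -> u n <= e) -> l <= e.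
Proof.
  intros Hu H. destruct (Rle_lt_dec l e) as [h|h]; auto.
  destruct (Hu (l - e) ltac:(lra)) as [N HN]. specialize (HN (N + K)%nat ltac:(lia)).
  specialize (H (N + K)%nat ltac:(lia)). unfold R_dist in HN.
  destruct (Rcase_abs (u (N + K)%nat - l)); [rewrite Rabs_left in HN|rewrite Rabs_right in HN]; lra.
Qed.

Lemma cv_const (c : R) : Un_cv (fun _ => c) c.
Proof. intros eps He; exists 0%nat; intros; unfold R_dist; rewrite Rminus_diag, Rabs_R0; lra. Qed.

Lemma cv_partial_sums (f : nat -> nat -> R) (g : nat -> R) (N : nat) :
  (forall i, Un_cv (fun b => f b i) (g i)) -> Un_cv (fun b => sum_f_R0 (f b) N) (sum_f_R0 g N).
Proof. intros H; induction N; simpl; auto. apply CV_plus; auto. Qed.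

Lemma cv_Cnorm2_sub (c : Cx) (v : nat -> Cx) (r s : R) :
  Un_cv (fun b => re (v b)) r -> Un_cv (fun b => im (v b)) s ->
  Un_cv (fun b => Cnorm2 (Csub c (v b))) (Cnorm2 (Csub c (mkC r s))).
Proof.
  intros H1 H2. unfold Cnorm2, Csub; simpl.
  assert (A1 : Un_cv (fun b => re c - re (v b)) (re c - r)) by (apply CV_minus; auto; apply cv_const).
  assert (A2 : Un_cv (fun b => im c - im (v b)) (im c - s)) by (apply CV_minus; auto; apply cv_const).
  apply CV_plus; apply CV_mult; auto.
Qed.

Lemma l2_cauchy_limit (w : nat -> vec) :
  (forall eps, eps > 0 -> exists K, forall a b, (K <= a)%nat -> (K <= b)%nat ->
     norm_sq_le (vsub (w a) (w b)) eps) ->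
  exists y, forall eps, eps > 0 -> exists K, forall a, (K <= a)%nat -> norm_sq_le (vsub (w a) y) eps.
Proof.
  intros Hc.
  assert (Hre : forall i, Cauchy_crit (fun a => re (w a i))).
  { intros i eps He. destruct (Hc (eps * eps / 2)) as [K HK]; [nra|].
    exists K. intros a b Ha Hb. unfold R_dist. apply sq_small; auto.
    pose proof (coord_le _ _ i (HK a b Ha Hb)). pose proof (Cnorm2_re (vsub (w a) (w b) i)).
    unfold vsub, Csub in *; simpl in *. lra. }
  assert (Him : forall i, Cauchy_crit (fun a => im (w a i))).
  { intros i eps He. destruct (Hc (eps * eps / 2)) as [K HK]; [nra|].
    exists K. intros a b Ha Hb. unfold R_dist. apply sq_small; auto.
    pose proof (coord_le _ _ i (HK a b Ha Hb)). pose proof (Cnorm2_im (vsub (w a) (w b) i)).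
    unfold vsub, Csub in *; simpl in *. lra. }
  exists (fun i => mkC (proj1_sig (Rcomplete.R_complete _ (Hre i)))
                       (proj1_sig (Rcomplete.R_complete _ (Him i)))).
  intros eps He. destruct (Hc eps He) as [K HK]. exists K. intros a Ha N.
  (* the partial sums of |w a - y|^2 are limits of those of |w a - w b|^2 *)
  apply cv_le with (u := fun b => sum_f_R0 (fun i => Cnorm2 (vsub (w a) (w b) i)) N) (K := K).
  - unfold vsub. apply cv_partial_sums. intros i.
    apply cv_Cnorm2_sub; simpl; destruct Rcomplete.R_complete; auto.
  - intros b Hb. apply HK; auto.
Qed.

Definition finite_range (Q : Op) (L : nat) : Prop := forall x i, (L <= i)%nat -> Q x i = C0.

Definition coord_continuous (Q : Op) : Prop :=
  forall (xs : nat -> vec) x, (forall j, null_seq (fun a => Csub (xs a j) (x j))) ->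
    forall i, null_seq (fun a => Csub (Q (xs a) i) (Q x i)).

Definition finite_range_approximable (A : Op) : Prop :=
  forall eps, eps > 0 -> exists (Q : Op) (L : nat),
    (forall x c, norm_sq_le x c -> norm_sq_le (vsub (A x) (Q x)) (eps * c)) /\
    finite_range Q L /\ coord_continuous Q.

Lemma approximable_cauchy (A : Op) (xs : nat -> vec) (x : vec) :
  finite_range_approximable A -> (forall a, norm_sq_le (xs a) 1) ->
  (forall j, null_seq (fun a => Csub (xs a j) (x j))) ->
  forall eps, eps > 0 -> exists K, forall a b, (K <= a)%nat -> (K <= b)%nat ->
    norm_sq_le (vsub (A (xs a)) (A (xs b))) eps.
Proof.
  intros H Hxs Hx eps He. destruct (H (eps / 16) ltac:(lra)) as [Q [L [HQ [HL HQc]]]].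
  destruct (finite_support_norm_conv (fun a => Q (xs a)) (Q x) L
              (fun a i Hi => HL _ i Hi) (fun i Hi => HL _ i Hi) (HQc xs x Hx) (eps / 16) ltac:(lra))
    as [K HK].
  exists K. intros a b Ha Hb.
  assert (Ha' : norm_sq_le (vsub (A (xs a)) (Q x)) (2 * (eps / 16 * 1) + 2 * (eps / 16)))
    by (apply norm_sq_le_sub_tri with (Q (xs a)); auto).
  assert (Hb' : norm_sq_le (vsub (Q x) (A (xs b))) (2 * (eps / 16) + 2 * (eps / 16 * 1))).
  { apply norm_sq_le_sub_tri with (Q (xs b)); apply norm_sq_le_subC; auto. }
  eapply norm_sq_le_mono; [apply (norm_sq_le_sub_tri _ _ _ _ _ Ha' Hb')|lra].
Qed.

Lemma compact_of_approximable (A : Op) : finite_range_approximable A -> compact_op A.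
Proof.
  intros H xs Hxs.
  destruct (coordinatewise_subseq xs Hxs) as [phi [x [Hphi Hx]]].
  destruct (l2_cauchy_limit (fun a => A (xs (phi a)))
              (approximable_cauchy A (fun a => xs (phi a)) x H (fun a => Hxs (phi a)) Hx))
    as [y Hy].
  exists phi. split; [exact Hphi|]. exists y. split; [|exact Hy].
  (* [y] is square summable: it is close to [A (xs (phi K))], which is close
     to the finitely supported [Q (xs (phi K))] *)
  destruct (Hy 1 ltac:(lra)) as [K HK].
  destruct (H 1 ltac:(lra)) as [Q [L [HQ [HL _]]]].
  eexists. apply (norm_sq_le_near (A (xs (phi K)))); [apply HK; auto|].
  apply (norm_sq_le_near (Q (xs (phi K)))).
  - apply norm_sq_le_subC, HQ, Hxs.
  - apply (norm_sq_le_finite _ L). intros; apply HL; auto.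
Qed.

(** ** Compactness means vanishing of the diagonals *)

Definition diagonals_vanish (A : Op) : Prop :=
  forall p q, null_seq (fun n => A (unit_vec (n + q)) (n + p)%nat).

Section VanishingDiagonals.

Variable A : Op.
Hypothesis HA : in_Toeplitz A.

Lemma diagonals_vanish_shift (J : nat) (y : vec) (i : nat) : diagonals_vanish A ->
  null_seq (fun N => A (Tnm N 0 (trunc J y)) (i + N)%nat).
Proof.
  intros HD. eapply null_seq_ext.
  { intros N. rewrite (toeplitz_shift_trunc A HA). reflexivity. }
  apply null_seq_Csum. intros j. apply null_seq_mul.
  eapply null_seq_ext; [|apply (HD i j)].
  intros N. simpl. rewrite (Nat.add_comm j N), (Nat.add_comm i N). reflexivity.
Qed.

(** If the diagonals vanish and the polynomial [p] is [eps]-close to [A], its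
    Toeplitz part has norm at most [sqrt 2 * eps]: far down the diagonal, [A]
    is negligible while [p] acts as its Toeplitz part. *)
Lemma toeplitz_part_small (p : poly) (eps : R) : diagonals_vanish A ->
  (forall x c, norm_sq_le x c -> norm_sq_le (vsub (A x) (poly_op p x)) (eps ^ 2 * c)) ->
  forall x c, norm_sq_le x c -> norm_sq_le (poly_op (toeplitz_part p) x) (2 * eps ^ 2 * c).
Proof.
  intros HD Hp x c Hx I.
  set (J := (I + poly_bound p)%nat). set (y := trunc J x).
  rewrite (sum_eq _ (fun i => Cnorm2 (poly_op (toeplitz_part p) y i))).
  2:{ intros i Hi. f_equal. apply toeplitz_part_local. intros j Hj. unfold y, trunc.
      destruct (Nat.leb_spec j J); [reflexivity|]. unfold J in *; lia. }
  apply le_epsilon. intros d Hd.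
  destruct (null_seq_sum (fun N i => A (Tnm N 0 y) (i + N)%nat) I
              (fun i => diagonals_vanish_shift J x i HD) (d / 2) ltac:(lra)) as [N0 HN0].
  set (N := (N0 + poly_bound p)%nat). set (z := Tnm N 0 y).
  specialize (HN0 N ltac:(unfold N; lia)). simpl in HN0.
  rewrite (sum_eq _ (fun i => Cnorm2 (poly_op p z (i + N)%nat))).
  2:{ intros i Hi. unfold z. rewrite poly_op_shift; auto. unfold N; lia. }
  assert (Hz : sum_f_R0 (fun i => Cnorm2 (vsub (A z) (poly_op p z) (i + N)%nat)) I <= eps ^ 2 * c).
  { eapply Rle_trans.
    - apply (sum_shift_le (fun k => Cnorm2 (vsub (A z) (poly_op p z) k))); intros; apply Cnorm2_nonneg.
    - apply Hp, norm_sq_le_shift, norm_sq_le_trunc, Hx. }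
  eapply Rle_trans.
  - apply sum_Rle with (Bn := fun i => 2 * Cnorm2 (vsub (A z) (poly_op p z) (i + N)%nat)
                                      + 2 * Cnorm2 (A z (i + N)%nat)).
    intros i _. apply Cnorm2_split.
  - rewrite sum_lin. unfold z in *. lra.
Qed.

(** Vanishing diagonals give compactness, since [A] is then approximated by
    [p - toeplitz_part p], which has finite range. *)
Lemma compact_of_diagonals_vanish : diagonals_vanish A -> compact_op A.
Proof.
  intros HD. apply compact_of_approximable. intros eps He.
  destruct (small_square eps 6 He ltac:(lra)) as [e [He1 He2]].
  destruct (toeplitz_poly_approx A HA e He1) as [p Hp].
  exists (fun x i => Csub (poly_op p x i) (poly_op (toeplitz_part p) x i)), (poly_bound p).
  split; [|split].
  - intros x c Hx. pose proof (norm_sq_le_nonneg _ _ Hx).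
    apply norm_sq_le_mono with (c := 2 * (e ^ 2 * c) + 2 * (2 * e ^ 2 * c)); [|nra].
    apply norm_sq_le_comb with (u := vsub (A x) (poly_op p x)) (v := poly_op (toeplitz_part p) x).
    + apply Hp, Hx.
    + apply (toeplitz_part_small p e HD Hp x c Hx).
    + intros i. unfold vsub.
      replace (Csub (A x i) (Csub (poly_op p x i) (poly_op (toeplitz_part p) x i)))
        with (Cadd (Csub (A x i) (poly_op p x i)) (poly_op (toeplitz_part p) x i)) by Cx_ring.
      apply Cnorm2_add.
  - intros x i Hi. simpl. rewrite poly_op_far_rows by auto. Cx_ring.
  - intros xs x Hc i.
    apply null_seq_ext with (v := fun a => Cadd (Csub (poly_op p (xs a) i) (poly_op p x i))
       (Cmul (mkC (-1) 0) (Csub (poly_op (toeplitz_part p) (xs a) i) (poly_op (toeplitz_part p) x i)))).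
    { intros a. f_equal. Cx_ring. }
    apply null_seq_add; [|apply null_seq_mul]; apply poly_op_coord_cont; auto.
Qed.

Lemma not_null_seq (u : nat -> Cx) : ~ null_seq u ->
  exists eps, eps > 0 /\ forall N, exists n, (N <= n)%nat /\ eps <= Cnorm2 (u n).
Proof.
  intros Hn. apply NNPP. intros H1. apply Hn. intros eps He. apply NNPP. intros H2.
  apply H1. exists eps. split; auto. intros N. apply NNPP. intros H3. apply H2.
  exists N. intros n Hnn. apply Rnot_le_lt. intros H4. apply H3. exists n; auto.
Qed.

(** A compact [A] has vanishing diagonals: the unit vectors [e_{n+q}] converge
    weakly to zero, so their images converge in norm, necessarily to zero as
    the columns of [A] vanish coordinatewise. *)
Lemma diagonals_vanish_of_compact : compact_op A -> diagonals_vanish A.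
Proof.
  intros HC p q. apply NNPP. intros Hn.
  destruct (not_null_seq _ Hn) as [eps [He Hinf]].
  destruct (subseq_of_frequent (fun _ n => eps <= Cnorm2 (A (unit_vec (n + q)) (n + p)%nat)))
    as [g [Hg Hgp]]; [intros _; apply Hinf|].
  destruct (HC (fun a => unit_vec (g a + q)%nat) (fun a => unit_vec_norm _))
    as [phi [Hphi [y [Hy Hconv]]]].
  assert (Hy0 : forall i, y i = C0).
  { intros i. apply Cnorm2_zero. apply Rle_antisym; [|apply Cnorm2_nonneg].
    apply le_epsilon. intros d Hd. rewrite Rplus_0_l.
    destruct (Hconv (d / 4) ltac:(lra)) as [J HJ].
    destruct (toeplitz_columns_vanish A HA i (d / 4) ltac:(lra)) as [N HN].
    set (a := (J + N)%nat).
    pose proof (coord_le _ _ i (HJ a ltac:(unfold a; lia))) as Ha. unfold vsub in Ha.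
    assert (Hfar : (N <= g (phi a) + q)%nat).
    { pose proof (strictly_increasing_ge phi Hphi a). pose proof (strictly_increasing_ge g Hg (phi a)).
      unfold a in *; lia. }
    specialize (HN _ Hfar).
    pose proof (Cnorm2_split (A (unit_vec (g (phi a) + q)%nat) i) (y i)). lra. }
  destruct (Hconv (eps / 2) ltac:(lra)) as [J HJ].
  pose proof (coord_le _ _ (g (phi J) + p)%nat (HJ J (le_n _))) as H. unfold vsub in H.
  rewrite Hy0, Cnorm2_sub0 in H. specialize (Hgp (phi J)). lra.
Qed.

End VanishingDiagonals.

(** ** Gauge covariance and Fourier coefficients

    With the gauge unitaries [U_t = diag(e^{i l t})], every [F] in the closure
    of the algebra generated by the [Ttil n m] satisfies [F(t) = U_t^* F(0) U_t].
    Hence the [(i,j)] entry of [F(t)] is [e^{i(j-i)t} A_{ij}] when [F(0) = A],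
    and the [k]-th Fourier coefficient of [F] carries the [k]-th diagonal of [A]. *)

Definition gauge (t : R) (x : vec) : vec := fun l => Cmul (Cexpi (INR l * t)) (x l).

Lemma norm_sq_le_gauge (t : R) (x : vec) (c : R) : norm_sq_le x c -> norm_sq_le (gauge t x) c.
Proof. apply norm_sq_le_ext. intros i; unfold gauge; rewrite Cnorm2_mul, Cnorm2_expi; ring. Qed.

Lemma algt_covariant (F : OpF) : in_algt F ->
  forall t x i, F t x i = Cmul (Cexpi (- INR i * t)) (F 0 (gauge t x) i).
Proof.
  induction 1 as [n m|F G _ IHF _ IHG|c F _ IHF|F G _ IHF _ IHG]; intros t x i.
  - unfold Ttil, op_scal, Tnm, gauge. destruct (Nat.leb_spec n i).
    + rewrite !Cexpi_mul. do 2 f_equal. rewrite plus_INR, minus_INR by lia. ring.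
    + rewrite !Cmul_C0. reflexivity.
  - cbv beta. unfold op_add. rewrite IHF, IHG. Cx_ring.
  - cbv beta. unfold op_scal. rewrite IHF. Cx_ring.
  - cbv beta. unfold op_mul. rewrite IHF. do 2 f_equal.
    apply functional_extensionality; intros l. unfold gauge at 1. rewrite IHG, Cexpi_mul.
    replace (INR l * t + - INR l * t) with 0 by ring. rewrite Cexpi_0, Cmul_one. reflexivity.
Qed.

Lemma Ttilde_covariant (F : OpF) : in_Ttilde F ->
  forall x, l2 x -> forall t i, F t x i = Cmul (Cexpi (- INR i * t)) (F 0 (gauge t x) i).
Proof.
  intros HF x [c Hx] t i. apply Cx_eq_of_small with (K := 4 * c). intros eps He.
  destruct (HF eps He) as [G [HG Hc]].
  pose proof (coord_le _ _ i (Hc t x c Hx)) as H1.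
  pose proof (coord_le _ _ i (Hc 0 (gauge t x) c (norm_sq_le_gauge t x c Hx))) as H2.
  unfold vsub in *.
  replace (Csub (F t x i) (Cmul (Cexpi (- INR i * t)) (F 0 (gauge t x) i))) with
    (Cadd (Csub (F t x i) (G t x i))
          (Cmul (Cexpi (- INR i * t)) (Csub (G 0 (gauge t x) i) (F 0 (gauge t x) i)))).
  2:{ rewrite (algt_covariant G HG t x i). Cx_ring. }
  eapply Rle_trans; [apply Cnorm2_add|].
  rewrite Cnorm2_mul, Cnorm2_expi, (Cnorm2_subC (G 0 _ i)). lra.
Qed.

Section FourierCoefficients.

Variables (A : Op) (F : OpF).
Hypotheses (HA : in_Toeplitz A) (HF : in_Ttilde F) (HFA : op_eq (pi_op F) A).

Lemma Ttilde_entry (t : R) (i j : nat) :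
  F t (unit_vec j) i = Cmul (Cexpi ((INR j - INR i) * t)) (A (unit_vec j) i).
Proof.
  rewrite (Ttilde_covariant F HF (unit_vec j) (unit_vec_l2 j)).
  replace (gauge t (unit_vec j)) with (vscal (Cexpi (INR j * t)) (unit_vec j)).
  2:{ apply functional_extensionality; intros l. unfold gauge, vscal, unit_vec.
      destruct (Nat.eqb_spec l j); [subst; reflexivity|]. rewrite !Cmul_C0; reflexivity. }
  change (F 0) with (pi_op F). rewrite HFA by (apply l2_scal, unit_vec_l2).
  rewrite (toeplitz_scal A HA) by apply unit_vec_l2. rewrite Cexpi_mul. do 2 f_equal. ring.
Qed.

(** On the [k]-th diagonal the integrand is constant, so the [k]-th Fourier
    coefficient has the same entries there as [A]. *)
Lemma fourier_coeff_entry (k : Z) (Ak : Op) (i j : nat) :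
  is_fourier_coeff F k Ak -> IZR k = INR j - INR i -> Ak (unit_vec j) i = A (unit_vec j) i.
Proof.
  intros Hk Hij.
  destruct (Hk (unit_vec j) (unit_vec_l2 j) i) as [[pr1 E1] [pr2 E2]].
  assert (Hconst : forall t, Cmul (Cexpi (- IZR k * t)) (F t (unit_vec j) i) = A (unit_vec j) i).
  { intros t. rewrite Ttilde_entry, Cexpi_mul.
    replace (- IZR k * t + (INR j - INR i) * t) with 0 by (rewrite Hij; ring).
    rewrite Cexpi_0, Cmul_one. reflexivity. }
  pose proof PI_RGT_0.
  assert (Hle : 0 <= 2 * PI) by lra.
  rewrite (RiemannInt_P18 pr1 (RiemannInt_P14 0 (2 * PI) (re (A (unit_vec j) i))) Hle) in E1
    by (intros t _; rewrite Hconst; reflexivity).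
  rewrite (RiemannInt_P18 pr2 (RiemannInt_P14 0 (2 * PI) (im (A (unit_vec j) i))) Hle) in E2
    by (intros t _; rewrite Hconst; reflexivity).
  rewrite RiemannInt_P15 in E1, E2.
  apply Cx_eq; nra.
Qed.

End FourierCoefficients.

(** ** The series representation *)

Definition Cpartial (b : nat -> Cx) (n : nat) : Cx :=
  mkC (sum_f_R0 (fun m => re (b m)) n) (sum_f_R0 (fun m => im (b m)) n).

Lemma diag_partial_entry (b : nat -> Cx) (N : nat) (x : vec) (i : nat) :
  diag_partial b N x i = Cmul (Cpartial b (Nat.min N i)) (x i).
Proof.
  induction N as [|N IH]; cbn [diag_partial].
  - unfold op_scal, Tnm, Cpartial. simpl. rewrite Nat.sub_0_r, Nat.add_0_r. reflexivity.
  - unfold op_add, op_scal. rewrite IH. unfold Tnm.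
    destruct (Nat.leb_spec (S N) i).
    + replace (i - S N + S N)%nat with i by lia.
      replace (Nat.min (S N) i) with (S N) by lia. replace (Nat.min N i) with N by lia.
      unfold Cpartial. Cx_ring.
    + replace (Nat.min (S N) i) with (Nat.min N i) by lia. Cx_ring.
Qed.

Lemma diag_series_entry (b : nat -> Cx) (S : Op) :
  diag_series_strong b S -> forall j, S (unit_vec j) j = Cpartial b j.
Proof.
  intros H j. symmetry. apply Cx_eq_of_small with (K := 1). intros eps He.
  destruct (H (unit_vec j) (unit_vec_l2 j) (eps ^ 2) ltac:(simpl; nra)) as [N0 HN].
  pose proof (coord_le _ _ j (HN (N0 + j)%nat ltac:(lia))) as Hj. unfold vsub in Hj.
  rewrite diag_partial_entry in Hj. replace (Nat.min (N0 + j) j) with j in Hj by lia.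
  unfold unit_vec in Hj. rewrite Nat.eqb_refl in Hj.
  replace (Cmul (Cpartial b j) Cone) with (Cpartial b j) in Hj by Cx_ring.
  rewrite Rmult_1_r. exact Hj.
Qed.

Lemma series_rep_diagonal (A : Op) (F : OpF) (beta : Z -> nat -> Cx) :
  in_Toeplitz A -> in_Ttilde F -> op_eq (pi_op F) A -> series_rep F beta ->
  forall k j,
    ((k <= 0)%Z -> Cpartial (beta k) j = A (unit_vec j) (j + Z.to_nat (- k))%nat) /\
    ((0 < k)%Z -> Cpartial (beta k) j = A (unit_vec (j + Z.to_nat k)%nat) j).
Proof.
  intros HA HF HFA Hrep k j.
  destruct (Hrep k) as [Ak [S [Hf [Hs [Hneg Hpos]]]]]. split; intros Hk.
  - set (s := Z.to_nat (- k)).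
    rewrite <- (fourier_coeff_entry A F HA HF HFA k Ak (j + s)%nat j Hf).
    2:{ rewrite plus_INR. unfold s. rewrite (INR_IZR_INZ (Z.to_nat _)), Z2Nat.id by lia. rewrite opp_IZR. ring. }
    rewrite (Hneg Hk (unit_vec j) (unit_vec_l2 j)). unfold op_mul, Tnm. fold s.
    rewrite (proj2 (Nat.leb_le s (j + s))) by lia.
    replace (j + s - s + 0)%nat with j by lia. rewrite (diag_series_entry _ _ Hs). reflexivity.
  - set (s := Z.to_nat k).
    rewrite <- (fourier_coeff_entry A F HA HF HFA k Ak j (j + s)%nat Hf).
    2:{ rewrite plus_INR. unfold s. rewrite (INR_IZR_INZ (Z.to_nat _)), Z2Nat.id by lia. ring. }
    rewrite (Hpos Hk (unit_vec (j + s)%nat) (unit_vec_l2 _)). unfold op_mul. fold s.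
    replace (Tnm 0 s (unit_vec (j + s)%nat)) with (unit_vec j).
    + rewrite (diag_series_entry _ _ Hs). reflexivity.
    + apply functional_extensionality; intros i. unfold Tnm, unit_vec. simpl.
      rewrite Nat.sub_0_r. destruct (Nat.eqb_spec (i + s) (j + s)), (Nat.eqb_spec i j); auto; lia.
Qed.

Lemma Csum_to_zero_iff (b : nat -> Cx) : Csum_to b C0 <-> null_seq (Cpartial b).
Proof.
  split.
  - intros [H1 H2]. eapply null_seq_ext; [|apply (null_seq_of_cv (Cpartial b) 0 0 H1 H2)].
    intros n. f_equal. unfold Cpartial; Cx_ring.
  - intros H. split; intros eps He; destruct (H (eps * eps / 2) ltac:(nra)) as [N HN];
      exists N; intros n Hn; specialize (HN n Hn); unfold R_dist; rewrite Rminus_0_r;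
      apply sq_small; auto.
    + pose proof (Cnorm2_re (Cpartial b n)). unfold Cpartial in *; simpl in *. lra.
    + pose proof (Cnorm2_im (Cpartial b n)). unfold Cpartial in *; simpl in *. lra.
Qed.

Lemma diagonals_vanish_iff_series (A : Op) (F : OpF) (beta : Z -> nat -> Cx) :
  in_Toeplitz A -> in_Ttilde F -> op_eq (pi_op F) A -> series_rep F beta ->
  (diagonals_vanish A <-> forall k, Csum_to (beta k) C0).
Proof.
  intros HA HF HFA Hrep. pose proof (series_rep_diagonal A F beta HA HF HFA Hrep) as HB. split.
  - intros HD k. apply Csum_to_zero_iff. destruct (Z_le_gt_dec k 0) as [Hk|Hk].
    + eapply null_seq_ext; [|apply (HD (Z.to_nat (- k)) 0%nat)].
      intros n. rewrite (proj1 (HB k n) Hk), Nat.add_0_r. reflexivity.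
    + eapply null_seq_ext; [|apply (HD 0%nat (Z.to_nat k))].
      intros n. rewrite (proj2 (HB k n) ltac:(lia)), Nat.add_0_r. reflexivity.
  - intros Hall p q. destruct (le_lt_dec q p) as [Hpq|Hpq].
    +
      set (k := (- Z.of_nat (p - q))%Z).
      eapply null_seq_ext; [|apply (null_seq_shift _ q (proj1 (Csum_to_zero_iff _) (Hall k)))].
      intros n. cbv beta. rewrite (proj1 (HB k (n + q)%nat) ltac:(unfold k; lia)).
      unfold k. rewrite Z.opp_involutive, Nat2Z.id. do 2 f_equal. lia.
    +
      set (k := Z.of_nat (q - p)).
      eapply null_seq_ext; [|apply (null_seq_shift _ p (proj1 (Csum_to_zero_iff _) (Hall k)))].
      intros n. cbv beta. rewrite (proj2 (HB k (n + p)%nat) ltac:(unfold k; lia)).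
      unfold k. rewrite Nat2Z.id. do 3 f_equal. lia.
Qed.

Theorem theorem3 (A : Op) (F : OpF) (beta : Z -> nat -> Cx) :
  in_Toeplitz A ->
  in_Ttilde F -> op_eq (pi_op F) A ->
  series_rep F beta ->
  (compact_op A <-> forall k : Z, Csum_to (beta k) C0).
Proof.
  intros HA HF HFA Hrep.
  rewrite <- (diagonals_vanish_iff_series A F beta HA HF HFA Hrep).
  split.
  - apply diagonals_vanish_of_compact; auto.
  - apply compact_of_diagonals_vanish; auto.
Qed.
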